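(* Let $p>2$ be a prime and $k$ any field of characteristic $p$. Then $R_1^{(p)}\neq R_2^{(p)}$.
   Context: Let $X=\{x_1,x_2,\ldots\}$ be a countably infinite set and let $k_0\langle X\rangle$ denote the free associative $k$-algebra (without identity) on $X$. A $T$-space of $k_0\langle X\rangle$ is a $k$-linear subspace closed under every algebra endomorphism of $k_0\langle X\rangle$; the $T$-space generated by a subset is the smallest $T$-space containing it. For $v_1,\ldots,v_d\in k_0\langle X\rangle$, let $S_d(v_1,\ldots,v_d)=\sum_{\sigma\in\Sigma_d}\prod_{i=1}^d v_{\sigma(i)}$, where $\Sigma_d$ is the symmetric group on $d$ letters. Let $R_1^{(d)}$ be the $T$-space generated by $S_d(x_1,\ldots,x_d)$, and let $R_2^{(d)}$ be the $T$-space generated by $R_1^{(d)}$ together with all products $u\,S_d(v_1,\ldots,v_d)$ with $u\in R_1^{(d)}$, $v_i\in k_0\langle X\rangle$. *)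

From HB Require Import structures.
From mathcomp Require Import all_boot all_order all_algebra all_fingroup.
From mathcomp.multinomials Require Import monalg.
Set Implicit Arguments. Unset Strict Implicit. Unset Printing Implicit Defensive.
Import GRing.Theory.
Local Open Scope ring_scope.

Notation FA k := {malg k[{fmonom nat}]}.

Section FreeAlg.
Context (k : fieldType).

(* k<X>: the free unital associative k-algebra on X = {x_0, x_1, ...},
   realised as the monoid algebra of the free monoid on nat. *)


Definition xvar (i : nat) : FA k := << fmu i >>.

(* membership in k_0<X>: zero coefficient on the empty word (constant term) *)
Definition k0 (f : FA k) : Prop := mcoeff (mone : {fmonom nat}) f = 0.

(* algebra endomorphisms of k_0<X> (k-linear, multiplicative maps k_0<X> -> k_0<X>),
   represented by functions FA k -> FA k whose restriction to k_0<X> has these properties *)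
Definition is_endo (g : FA k -> FA k) : Prop :=
  [/\ forall u, k0 u -> k0 (g u),
      forall (a : k) u v, k0 u -> k0 v -> g (a *: u + v) = a *: g u + g v
    & forall u v, k0 u -> k0 v -> g (u * v) = g u * g v].

Definition subspace0 (V : FA k -> Prop) : Prop :=
  [/\ forall f, V f -> k0 f, V 0 & forall (a : k) u v, V u -> V v -> V (a *: u + v)].

Definition Tspace (V : FA k -> Prop) : Prop :=
  subspace0 V /\ forall g, is_endo g -> forall f, V f -> V (g f).

Definition Tgen (G : FA k -> Prop) (f : FA k) : Prop :=
  forall V, Tspace V -> (forall h, G h -> V h) -> V f.

Definition Ssym (d : nat) (v : 'I_d -> FA k) : FA k :=
  \sum_(s : 'S_d) \prod_(i < d) v (s i).

Definition R1 (d : nat) : FA k -> Prop :=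
  Tgen (fun f => f = Ssym (fun i : 'I_d => xvar i)).

Definition R2 (d : nat) : FA k -> Prop :=
  Tgen (fun f => R1 d f \/
    exists (u : FA k) (v : 'I_d -> FA k),
      [/\ R1 d u, forall i, k0 (v i) & f = u * Ssym v]).

End FreeAlg.

From HB Require Import structures.
From mathcomp Require Import all_boot all_order all_algebra all_fingroup.
From mathcomp Require Import cyclic zify.
From mathcomp.multinomials Require Import monalg.
Set Implicit Arguments. Unset Strict Implicit. Unset Printing Implicit Defensive.
Import GRing.Theory.
Local Open Scope ring_scope.

(* In characteristic p the trace of S_p(M_1, ..., M_p) vanishes for all square
   matrices M_i: a cyclic rotation of the factors preserves the trace and splits
   Σ_p into orbits of size p.  Hence, for fixed matrices A_i, the polynomials f
   such that every endomorphic image of f evaluates at x_i := A_i to a matrix of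
   trace zero form a T-space containing S_p(x_0, ..., x_(p-1)), so they contain
   R_1.  But S_p(x_0, ..., x_(p-1)) S_p(x_p, ..., x_(2p-1)) lies in R_2, and
   sending x_0, ..., x_(p-1) to the matrix units along the path 0 -> 1 -> ... -> p
   and x_p, ..., x_(2p-1) to those along the way back evaluates it to E_00: a
   product of such chained units vanishes unless the chain is followed in order,
   so only the identity permutation contributes. *)

Definition rot_perm p : 'S_p := perm (@ordS_inj p).

Lemma rot_permX p j (i : 'I_p) : val ((rot_perm p ^+ j)%g i) = ((i + j) %% p)%N.
Proof.
elim: j => [|j IHj]; first by rewrite expg0 perm1 addn0 modn_small.
by rewrite expgSr permM permE /= IHj addnS -addn1 modnDml addn1.
Qed.

Lemma order_rot_perm p : prime p -> #[rot_perm p]%g = p.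
Proof.
move=> p_pr; have p_gt1 := prime_gt1 p_pr.
apply/(prime_nt_dvdP p_pr).
  rewrite order_eq1; apply/eqP => rot1.
  have := rot_permX 1 (Ordinal (ltnW p_gt1)).
  by rewrite expg1 rot1 perm1 /= add0n modn_small.
rewrite order_dvdn; apply/eqP/permP => i; rewrite perm1; apply: val_inj.
by rewrite rot_permX modnDr modn_small.
Qed.

Section TraceSymmetrization.
Variables (k : fieldType) (n : nat).

Lemma mxtrace_prod_ordS p (M : 'I_p -> 'M[k]_n) :
  \tr (\prod_(i < p) M (ordS i)) = \tr (\prod_(i < p) M i).
Proof.
case: p M => [|q] M; first by rewrite !big_ord0.
rewrite big_ord_recr big_ord_recl /= -!mulmxE mxtrace_mulC.
congr (\tr (_ *m _)); first by congr (M _); apply: val_inj; rewrite /= modnn.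
apply: eq_bigr => i _; congr (M _); apply: val_inj.
by rewrite /= modn_small // ltnS.
Qed.

Lemma sum_perm_mxtrace_prod_pchar p (M : 'I_p -> 'M[k]_n) :
  prime p -> p \in [pchar k] ->
  \sum_(s : 'S_p) \tr (\prod_(i < p) M (s i)) = 0.
Proof.
move=> p_pr p_char; pose F (s : 'S_p) := \tr (\prod_(i < p) M (s i)).
have F_rotX j s : F (rot_perm p ^+ j * s)%g = F s.
  elim: j s => [|j IHj] s; first by rewrite expg0 mul1g.
  rewrite expgS -mulgA -(IHj s); move: (_ * s)%g => t.
  rewrite /F -[RHS]mxtrace_prod_ordS.
  by congr (\tr _); apply: eq_bigr => i _; rewrite permM permE.
rewrite -(eq_bigl _ _ (fun s => in_setT s)) /=.
rewrite (set_partition_big _ (rcosets_partition (subsetT <[rot_perm p]>%g))) /=.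
apply: big1 => _ /rcosetsP [y _ ->].
rewrite (eq_bigr (fun _ => F y)); last first.
  by move=> x /rcosetP [_ /cycleP [j ->] ->]; exact: F_rotX.
by rewrite sumr_const card_rcoset -orderE order_rot_perm // mulrn_pchar.
Qed.

End TraceSymmetrization.

Lemma mxtrace_delta_mx (R : pzSemiRingType) n (i j : 'I_n) :
  \tr (delta_mx i j : 'M[R]_n) = (i == j)%:R.
Proof.
rewrite /mxtrace (bigD1 i) //= mxE eqxx /= big1 ?addr0 // => l /negbTE l_i.
by rewrite mxE l_i.
Qed.

Lemma traject_succn a n : traject succn a n = iota a n.
Proof. by elim: n a => //= n IHn a; rewrite IHn. Qed.

Lemma perm_iota_eq1 n (s : 'S_n) a :
  [seq val (s i) | i <- enum 'I_n] = iota a n -> s = 1%g.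
Proof.
case: n s => [|n] s sE; first by apply/permP => -[].
have a0 : a = 0%N.
  have : 0%N \in iota a n.+1.
    by rewrite -sE; apply/mapP; exists (s^-1 ord0)%g; rewrite ?mem_enum ?permKV.
  by rewrite mem_iota leqn0 => /andP [/eqP].
move: sE; rewrite a0 -val_enum_ord => /eq_in_map sE.
by apply/permP => i; apply: val_inj; rewrite perm1 sE ?mem_enum.
Qed.

Section ChainedMatrixUnits.
Variables (k : fieldType) (N n : nat) (e : nat -> 'I_N.+1).
Hypothesis e_inj : {in [pred x | x <= n]%N &, injective e}.

Definition chain_unit (a : nat) : 'M[k]_N.+1 := delta_mx (e a) (e a.+1).

Lemma prod_chain_unit a l : all [pred j | j < n]%N (a :: l) ->
  \prod_(j <- a :: l) chain_unit j =
  if fpath succn a l then delta_mx (e a) (e (last a l).+1) else 0.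
Proof.
elim: l a => [|b l IHl] a /=; first by rewrite big_seq1.
move=> /and3P [an bn ln]; rewrite big_cons IHl /= ?bn //.
case: (fpath succn b l); last by rewrite andbF mulr0.
rewrite andbT -mulmxE mul_delta_mx_cond.
have [<-|ab] := eqVneq a.+1 b; first by rewrite eqxx mulr1n.
suff -> : (e a.+1 == e b) = false by rewrite mulr0n.
by apply: contraNF ab => /eqP eab; apply/eqP/e_inj => //; exact: ltnW.
Qed.

Lemma sum_perm_prod_chain_unit : (0 < n)%N ->
  \sum_(s : 'S_n) \prod_(i < n) chain_unit (s i) = delta_mx (e 0) (e n).
Proof.
move=> n_gt0; pose sv (s : 'S_n) := [seq val (s i) | i <- enum 'I_n].
have sv_lt (s : 'S_n) : all [pred j | j < n]%N (sv s).
  by apply/allP => x /mapP [i _ ->]; exact: ltn_ord.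
have sv_size (s : 'S_n) : size (sv s) = n by rewrite size_map size_enum_ord.
have sv_prod (s : 'S_n) :
    \prod_(i < n) chain_unit (s i) = \prod_(j <- sv s) chain_unit j.
  by rewrite big_map enumT unlock.
have sv1 : sv 1%g = 0%N :: iota 1 n.-1.
  rewrite -[RHS]/(iota 0 n.-1.+1) prednK // -val_enum_ord.
  by apply: eq_map => i; rewrite perm1.
rewrite (bigD1 1%g) //= [X in _ + X]big1 ?addr0 => [|s s_neq1].
  rewrite sv_prod sv1 prod_chain_unit; last by rewrite -sv1; exact: sv_lt.
  by rewrite -traject_succn fpath_traject last_traject iter_succn_0 prednK.
rewrite sv_prod; case sE: (sv s) (sv_size s) (sv_lt s) => [|a l] /= size_l.
  by rewrite -size_l in n_gt0.
move=> sv_all; rewrite prod_chain_unit //; case: ifP => // /fpathE lE.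
case/eqP: s_neq1; apply: (@perm_iota_eq1 _ _ a).
by rewrite -/(sv s) sE lE -traject_succn -size_l.
Qed.

End ChainedMatrixUnits.

Section MatrixEvaluation.
Variables (k : fieldType) (N : nat) (A : nat -> 'M[k]_N.+1).

Definition word_mx (m : {fmonom nat}) : 'M[k]_N.+1 := \prod_(i <- (m : seq nat)) A i.

Lemma word_mx_is_mmorphism : mmorphism word_mx.
Proof. by split=> [m1 m2|]; rewrite /word_mx ?fm1 ?big_nil // fmM big_cat. Qed.

HB.instance Definition _ := isMultiplicative.Build _ _ word_mx word_mx_is_mmorphism.

Definition mxeval (f : FA k) : 'M[k]_N.+1 := mmap (@scalar_mx k N.+1) word_mx f.

Lemma mxeval_is_additive : zmod_morphism mxeval.
Proof. exact: mmap_is_additive. Qed.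

Lemma mxeval_is_multiplicative : multiplicative mxeval.
Proof.
apply: commr_mmap_is_multiplicative => a m m'.
by rewrite /GRing.comm /= -!mulmxE scalar_mxC.
Qed.

HB.instance Definition _ :=
  GRing.isZmodMorphism.Build _ _ mxeval mxeval_is_additive.
HB.instance Definition _ :=
  GRing.isMultiplicative.Build _ _ mxeval mxeval_is_multiplicative.

Lemma mxevalZ a f : mxeval (a *: f) = a *: mxeval f.
Proof. by rewrite /mxeval mmapZ /= -mul_scalar_mx mulmxE. Qed.

Lemma mxeval_xvar i : mxeval (xvar k i) = A i.
Proof. by rewrite /mxeval mmapU /= mul1r /word_mx fmuE /= big_seq1. Qed.

End MatrixEvaluation.

Section Endomorphisms.
Variable k : fieldType.
Implicit Types u v f : FA k.

Lemma k0_0 : k0 (0 : FA k).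
Proof. by rewrite /k0 mcoeff0. Qed.

Lemma k0_lin (a : k) u v : k0 u -> k0 v -> k0 (a *: u + v).
Proof. by rewrite /k0 mcoeffD mcoeffZ => -> ->; rewrite mulr0 addr0. Qed.

Lemma k0D u v : k0 u -> k0 v -> k0 (u + v).
Proof. by rewrite -{2}(scale1r u); apply: k0_lin. Qed.

Lemma k0M u v : k0 u -> k0 v -> k0 (u * v).
Proof. by rewrite /k0 (mcoeff1g_is_multiplicative _ _).1 => -> ->; rewrite mulr0. Qed.

Lemma k0_xvar i : k0 (xvar k i).
Proof. by rewrite /k0 /xvar mcoeffU fm1_eq1. Qed.

Lemma is_endo_id : is_endo (@id (FA k)).
Proof. by []. Qed.

Lemma is_endo_comp (g h : FA k -> FA k) : is_endo g -> is_endo h -> is_endo (g \o h).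
Proof.
move=> [g0 gl gM] [h0 hl hM]; split=> /= [u /h0 /g0 //|a u v ku kv|u v ku kv].
  by rewrite hl // gl //; apply: h0.
by rewrite hM // gM //; apply: h0.
Qed.

Section Endo.
Variable g : FA k -> FA k.
Hypothesis g_endo : is_endo g.

Lemma endo0 : g 0 = 0.
Proof.
have [_ gl _] := g_endo; have := gl 1 0 0 k0_0 k0_0.
by rewrite !scale1r addr0 -{1}[g 0]addr0 => /addrI.
Qed.

Lemma endoD u v : k0 u -> k0 v -> g (u + v) = g u + g v.
Proof.
by have [_ gl _] := g_endo => ku kv; rewrite -[u in g (u + v)]scale1r gl // scale1r.
Qed.

Lemma endo_sum (I : Type) (r : seq I) (F : I -> FA k) : (forall i, k0 (F i)) ->
  k0 (\sum_(i <- r) F i) /\ g (\sum_(i <- r) F i) = \sum_(i <- r) g (F i).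
Proof.
move=> kF; apply: (big_ind2 (fun x y => k0 x /\ g x = y)) => //.
- by split; [exact: k0_0 | exact: endo0].
- by move=> x1 x2 y1 y2 [kx1 <-] [ky1 <-]; split; [exact: k0D | exact: endoD].
Qed.

Lemma endo_prod n (F : 'I_n.+1 -> FA k) : (forall i, k0 (F i)) ->
  k0 (\prod_(i < n.+1) F i) /\ g (\prod_(i < n.+1) F i) = \prod_(i < n.+1) g (F i).
Proof.
have [_ _ gM] := g_endo.
elim: n F => [|n IHn] F kF; first by rewrite !big_ord1.
have [kP gP] := IHn (fun i => F (widen_ord (leqnSn _) i)) (fun i => kF _).
by rewrite big_ord_recr [RHS]big_ord_recr /= -gP; split; [exact: k0M | rewrite gM].
Qed.

Lemma endo_Ssym n (v : 'I_n.+1 -> FA k) : (forall i, k0 (v i)) ->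
  k0 (Ssym v) /\ g (Ssym v) = Ssym (g \o v).
Proof.
move=> kv.
have kP (s : 'S_n.+1) := @endo_prod n (fun i => v (s i)) (fun i => kv (s i)).
have [kS gS] := endo_sum (index_enum 'S_n.+1) (fun s => (kP s).1).
by split=> //; rewrite gS; apply: eq_bigr => s _; rewrite (kP s).2.
Qed.

End Endo.
End Endomorphisms.

Section TraceIdentity.
Variables (k : fieldType) (N : nat) (A : nat -> 'M[k]_N.+1).

Definition tr_null (f : FA k) : Prop :=
  k0 f /\ forall g, is_endo g -> \tr (mxeval A (g f)) = 0.

Lemma Tspace_tr_null : Tspace tr_null.
Proof.
split; first split.
- by move=> f [].
- by split=> [|g g_endo]; [exact: k0_0 | rewrite (endo0 g_endo) !raddf0].
- move=> a u v [ku tr_u] [kv tr_v]; split=> [|g g_endo]; first exact: k0_lin.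
  have [_ gl _] := g_endo.
  by rewrite gl // raddfD /= mxevalZ mxtraceD mxtraceZ tr_u // tr_v // mulr0 addr0.
- move=> h h_endo f [kf tr_f]; split=> [|g g_endo].
    by case: h_endo => h0 _ _; exact: h0.
  exact: (tr_f _ (is_endo_comp g_endo h_endo)).
Qed.

Lemma mxeval_Ssym_xvar n (h : 'I_n -> nat) :
  mxeval A (Ssym (fun i => xvar k (h i))) = \sum_(s : 'S_n) \prod_(i < n) A (h (s i)).
Proof.
rewrite /Ssym rmorph_sum; apply: eq_bigr => s _.
by rewrite rmorph_prod; apply: eq_bigr => i _; exact: mxeval_xvar.
Qed.

Lemma tr_null_Ssym_xvar p : prime p -> p \in [pchar k] ->
  tr_null (Ssym (fun i : 'I_p => xvar k i)).
Proof.
case: p => // p p_pr p_char; have kx i := k0_xvar k i.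
split=> [|g g_endo]; first exact: (endo_Ssym (@is_endo_id k) kx).1.
rewrite (endo_Ssym g_endo kx).2 /Ssym rmorph_sum raddf_sum /=.
rewrite -[RHS](sum_perm_mxtrace_prod_pchar (fun i => mxeval A (g (xvar k i))) p_pr p_char).
by apply: eq_bigr => s _; rewrite rmorph_prod.
Qed.

Lemma R1_tr_null p f : prime p -> p \in [pchar k] -> R1 p f -> tr_null f.
Proof.
move=> p_pr p_char; apply; first exact: Tspace_tr_null.
by move=> _ ->; exact: tr_null_Ssym_xvar.
Qed.

End TraceIdentity.

Lemma R2_Ssym_mul (k : fieldType) p (v : 'I_p -> FA k) : (forall i, k0 (v i)) ->
  R2 p (Ssym (fun i : 'I_p => xvar k i) * Ssym v).
Proof.
move=> kv V _ V_gen; apply: V_gen; right.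
by exists (Ssym (fun i : 'I_p => xvar k i)), v; split=> // W _; apply.
Qed.

Section CycleOfMatrixUnits.
Variables (k : fieldType) (p : nat).

Definition cycle_up (j : nat) : 'I_p.+1 := inord j.
Definition cycle_down (j : nat) : 'I_p.+1 := inord (p - j).

Definition cycle_mx (i : nat) : 'M[k]_p.+1 :=
  if (i < p)%N then chain_unit k cycle_up i else chain_unit k cycle_down (i - p).

Lemma cycle_up_inj : {in [pred x | x <= p]%N &, injective cycle_up}.
Proof. by move=> x y xp yp /(congr1 (@nat_of_ord _)); rewrite /cycle_up !inordK. Qed.

Lemma cycle_down_inj : {in [pred x | x <= p]%N &, injective cycle_down}.
Proof.
move=> x y xp yp /(congr1 (@nat_of_ord _)).
rewrite /cycle_down !inordK ?ltnS ?leq_subr //.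
by rewrite !inE in xp yp; lia.
Qed.

Lemma mxtrace_cycle_mx_Ssym_mul : (0 < p)%N ->
  \tr (mxeval cycle_mx (Ssym (fun i : 'I_p => xvar k i) *
                        Ssym (fun i : 'I_p => xvar k (p + i)))) = 1.
Proof.
move=> p_gt0; rewrite rmorphM /= !mxeval_Ssym_xvar.
have -> : \sum_(s : 'S_p) \prod_(i < p) cycle_mx (s i) =
          delta_mx (cycle_up 0) (cycle_up p).
  rewrite -(sum_perm_prod_chain_unit k cycle_up_inj p_gt0).
  by apply: eq_bigr => s _; apply: eq_bigr => i _; rewrite /cycle_mx ltn_ord.
have -> : \sum_(s : 'S_p) \prod_(i < p) cycle_mx (p + s i) =
          delta_mx (cycle_down 0) (cycle_down p).
  rewrite -(sum_perm_prod_chain_unit k cycle_down_inj p_gt0).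
  by apply: eq_bigr => s _; apply: eq_bigr => i _; rewrite /cycle_mx ltnNge leq_addr addKn.
have -> : cycle_down 0 = cycle_up p by rewrite /cycle_down subn0.
by rewrite -mulmxE mul_delta_mx /cycle_down subnn mxtrace_delta_mx eqxx.
Qed.

End CycleOfMatrixUnits.

(* The argument does not need [2 < p]. *)
Theorem theorem5p1 (p : nat) (k : fieldType) :
  prime p -> (2 < p)%N -> (p \in [pchar k])%R ->
  ~ (forall f : FA k, R1 p f <-> R2 p f).
Proof.
move=> p_pr _ p_char R1_R2.
have kx i := k0_xvar k (p + i).
have R1_f := (R1_R2 _).2 (R2_Ssym_mul kx).
have [_ tr0] := R1_tr_null (cycle_mx k p) p_pr p_char R1_f.
have := tr0 _ (@is_endo_id k).
by rewrite mxtrace_cycle_mx_Ssym_mul ?prime_gt0 // => /eqP; rewrite oner_eq0.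
Qed.
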